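(* Let $(G,\cdot)$ be a loop and $(H,\cdot)$ a non-trivial subloop. Then $(xs\cdot z)s=x(sz\cdot s)$ holds for all $x,z\in G$ and $s\in H$ if and only if $(R_s^{-1},L_sR_s,R_s)\in \mathrm{S_{1st}AUT}(G_H)$ for every $s\in H$.
   Context: Juxtaposition binds more tightly than $\cdot$. Maps are written on the right and composed left to right; $xR_s=x\cdot s$, $xL_s=s\cdot x$. $SSYM(G_H)$ is the set of bijections $A$ of $G$ with $HA=H$. $\mathrm{S_{1st}AUT}(G_H)$ is the set of triples $(U,V,W)$ with $U,V,W\in SSYM(G_H)$ and $xU\cdot yV=(x\cdot y)W$ for all $x,y\in G$. *)

From Stdlib Require Import ClassicalEpsilon.

Record Loop := MkLoop {
  carrier :> Type;
  lmul : carrier -> carrier -> carrier;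
  lone : carrier;
  lmul1l : forall x, lmul lone x = x;
  lmul1r : forall x, lmul x lone = x;
  lsolve_l : forall a b, exists! x, lmul a x = b;
  lsolve_r : forall a b, exists! y, lmul y a = b
}.

Section LoopDefs.
Variable G : Loop.
Local Notation "x * y" := (lmul G x y).

Lemma ex_of_uniq {T} (P : T -> Prop) : (exists! x, P x) -> exists x, P x.
Proof. intros [x [Hx _]]; exists x; exact Hx. Qed.

Definition rdiv (b a : G) : G :=
  proj1_sig (constructive_indefinite_description _
    (ex_of_uniq _ (lsolve_r G a b))).
Definition ldiv (a b : G) : G :=
  proj1_sig (constructive_indefinite_description _
    (ex_of_uniq _ (lsolve_l G a b))).

Definition Rmap (s : G) : G -> G := fun x => x * s.
Definition Lmap (s : G) : G -> G := fun x => s * x.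
Definition Rinv (s : G) : G -> G := fun x => rdiv x s.
(* maps written on the right, composed left to right: x (A B) = (x A) B *)
Definition compLR (A B : G -> G) : G -> G := fun x => B (A x).

Definition is_subloop (H : G -> Prop) : Prop :=
  H (lone G) /\
  (forall a b, H a -> H b -> H (a * b)) /\
  (forall a b, H a -> H b -> H (ldiv a b)) /\
  (forall a b, H a -> H b -> H (rdiv b a)).

Definition nontrivial (H : G -> Prop) : Prop := exists h, H h /\ h <> lone G.

Definition bijective_map (A : G -> G) : Prop :=
  (forall x y, A x = A y -> x = y) /\ (forall y, exists x, A x = y).

Definition SSYM (H : G -> Prop) (A : G -> G) : Prop :=
  bijective_map A /\ (forall y, H y <-> exists x, H x /\ A x = y).

Definition S1stAUT (H : G -> Prop) (U V W : G -> G) : Prop :=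
  SSYM H U /\ SSYM H V /\ SSYM H W /\
  (forall x y, U x * V y = W (x * y)).

End LoopDefs.

From Stdlib Require Import ClassicalEpsilon.

(* For [s] in [H], the maps R_s^{-1}, L_s R_s and R_s are permutations of [G]
   whose inverses (R_s, x |-> s\((x/s)) and R_s^{-1}) are built from
   multiplication and division by [s], so all of them fix [H] setwise.  The
   autotopism equation x R_s^{-1} . (s y) s = (x y) s, after substituting
   x = x' s, is exactly the identity (x' s . y) s = x' (s y . s). *)

Section LoopDivision.
Variable G : Loop.
Local Notation "x * y" := (lmul G x y).

Lemma rdivK (b a : G) : rdiv G b a * a = b.
Proof. unfold rdiv; destruct constructive_indefinite_description; assumption. Qed.

Lemma ldivK (a b : G) : a * ldiv G a b = b.
Proof. unfold ldiv; destruct constructive_indefinite_description; assumption. Qed.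

Lemma mulIr (a y z : G) : y * a = z * a -> y = z.
Proof.
  intros E; destruct (lsolve_r G a (z * a)) as [w [_ Uw]].
  rewrite <- (Uw y E); apply Uw; reflexivity.
Qed.

Lemma mulrI (a y z : G) : a * y = a * z -> y = z.
Proof.
  intros E; destruct (lsolve_l G a (a * z)) as [w [_ Uw]].
  rewrite <- (Uw y E); apply Uw; reflexivity.
Qed.

Lemma mulrK (x s : G) : rdiv G (x * s) s = x.
Proof. apply (mulIr s), rdivK. Qed.

Lemma SSYM_of_cancel (H : G -> Prop) (A B : G -> G) :
  (forall x, B (A x) = x) -> (forall x, A (B x) = x) ->
  (forall x, H x -> H (A x)) -> (forall x, H x -> H (B x)) ->
  SSYM G H A.
Proof.
  intros BA AB HA HB; split; [split|].
  - intros x y E; rewrite <- (BA x), <- (BA y), E; reflexivity.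
  - intros y; exists (B y); apply AB.
  - intros y; split.
    + intros Hy; exists (B y); auto.
    + intros [x [Hx <-]]; auto.
Qed.

Section TranslationsBySubloopElements.
Variable H : G -> Prop.
Hypothesis HH : is_subloop G H.
Variable s : G.
Hypothesis Hs : H s.

Lemma SSYM_Rmap : SSYM G H (Rmap G s).
Proof.
  destruct HH as [_ [Hmul [_ Hrdiv]]].
  apply SSYM_of_cancel with (B := Rinv G s); unfold Rmap, Rinv.
  - intros x; apply mulrK.
  - intros x; apply rdivK.
  - auto.
  - auto.
Qed.

Lemma SSYM_Rinv : SSYM G H (Rinv G s).
Proof.
  destruct HH as [_ [Hmul [_ Hrdiv]]].
  apply SSYM_of_cancel with (B := Rmap G s); unfold Rmap, Rinv.
  - intros x; apply rdivK.
  - intros x; apply mulrK.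
  - auto.
  - auto.
Qed.

Lemma SSYM_LmapRmap : SSYM G H (compLR G (Lmap G s) (Rmap G s)).
Proof.
  destruct HH as [_ [Hmul [Hldiv Hrdiv]]].
  apply SSYM_of_cancel with (B := fun x => ldiv G s (rdiv G x s));
    unfold compLR, Lmap, Rmap.
  - intros x; rewrite mulrK; apply (mulrI s), ldivK.
  - intros x; rewrite ldivK; apply rdivK.
  - auto.
  - auto.
Qed.

End TranslationsBySubloopElements.

Lemma autotopism_eq_iff (s : G) :
  (forall x z : G, ((x * s) * z) * s = x * ((s * z) * s)) <->
  (forall x y : G, rdiv G x s * ((s * y) * s) = (x * y) * s).
Proof.
  split.
  - intros Id x y; rewrite <- Id, rdivK; reflexivity.
  - intros E x z; rewrite <- E, mulrK; reflexivity.
Qed.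

End LoopDivision.

Theorem theorem3p4 (G : Loop) (H : G -> Prop)
  (HH : is_subloop G H) (Hnt : nontrivial G H) :
  (forall x z s : G, H s ->
     lmul G (lmul G (lmul G x s) z) s = lmul G x (lmul G (lmul G s z) s))
  <->
  (forall s : G, H s ->
     S1stAUT G H (Rinv G s) (compLR G (Lmap G s) (Rmap G s)) (Rmap G s)).
Proof.
  split.
  - intros Id s Hs.
    split; [|split; [|split]].
    + exact (SSYM_Rinv G H HH s Hs).
    + exact (SSYM_LmapRmap G H HH s Hs).
    + exact (SSYM_Rmap G H HH s Hs).
    + apply (autotopism_eq_iff G s); intros x z; apply Id, Hs.
  - intros Aut x z s Hs.
    destruct (Aut s Hs) as [_ [_ [_ E]]].
    revert x z; apply (autotopism_eq_iff G s), E.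
Qed.
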